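(* Let $\Gamma$ be a non-elementary hyperbolic group with finite generating set $S$, and let $(\gamma_n)$ be a sequence of distinct elements of $\Gamma$. There is $h\in\Gamma$ such that the sequence $(l_S([\gamma_n,h]))_n$ is unbounded.
   Context: $[g,h]=ghg^{-1}h^{-1}$; $l_S$ is the translation length on the Cayley graph $C_S(\Gamma)$. Non-elementary: contains a free subgroup of rank 2. *)

From Stdlib Require Import List Arith.
Import ListNotations.
Set Implicit Arguments.


(* A group: carrier with multiplication, inverse, identity (left axioms suffice). *)
Record Group := {
  carrier :> Type;
  gmul : carrier -> carrier -> carrier;
  ginv : carrier -> carrier;
  gone : carrier;
  gmul_assoc : forall x y z, gmul x (gmul y z) = gmul (gmul x y) z;
  gmul_1l : forall x, gmul gone x = x;
  gmul_Vl : forall x, gmul (ginv x) x = gone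
}.

Arguments gmul {_}.
Arguments ginv {_}.
Arguments gone {_}.

Section Defs.
Context {G : Group}.

Definition word_prod (w : list G) : G := fold_right (@gmul G) (@gone G) w.

Definition comm (g h : G) : G :=
  gmul g (gmul h (gmul (ginv g) (ginv h))).

Definition S_letter (S : list G) (x : G) : Prop := In x S \/ In (ginv x) S.

Definition represents (S : list G) (w : list G) (g : G) : Prop :=
  Forall (S_letter S) w /\ word_prod w = g.

Definition generates (S : list G) : Prop := forall g, exists w, represents S w g.

Definition word_len_is (S : list G) (g : G) (n : nat) : Prop :=
  (exists w, represents S w g /\ length w = n) /\
  (forall w, represents S w g -> n <= length w).

(* d_S(x,y) = |x^-1 y|_S : the (vertex) metric of the Cayley graph C_S(G) *)
Definition dist_is (S : list G) (x y : G) (n : nat) : Prop :=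
  word_len_is S (gmul (ginv x) y) n.

(* Gromov hyperbolicity of the Cayley graph, via the four-point condition
   on its vertex set: d(x,y)+d(z,w) <= max(d(x,z)+d(y,w), d(x,w)+d(y,z)) + 2 delta *)
Definition hyperbolic (S : list G) : Prop :=
  exists delta : nat, forall x y z w dxy dzw dxz dyw dxw dyz,
    dist_is S x y dxy -> dist_is S z w dzw -> dist_is S x z dxz ->
    dist_is S y w dyw -> dist_is S x w dxw -> dist_is S y z dyz ->
    dxy + dzw <= Nat.max (dxz + dyw) (dxw + dyz) + 2 * delta.

(* letters of the free group on {a,b}: (true = a / false = b, true = +1 / false = -1) *)
Definition letter_val (a b : G) (l : bool * bool) : G :=
  let x := if fst l then a else b in if snd l then x else ginv x.

Fixpoint freely_reduced (l : list (bool * bool)) : Prop :=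
  match l with
  | x :: ((y :: _) as t) => ~ (fst x = fst y /\ snd x <> snd y) /\ freely_reduced t
  | _ => True
  end.

Definition free_pair (a b : G) : Prop :=
  forall l, l <> [] -> freely_reduced l -> word_prod (map (letter_val a b) l) <> @gone G.

(* non-elementary: contains a free subgroup of rank 2 *)
Definition non_elementary : Prop := exists a b : G, free_pair a b.

(* l_S(g) <= B : translation length (minimal displacement  min_x d_S(x, g x))
   on the Cayley graph is at most B *)
Definition transl_len_le (S : list G) (g : G) (B : nat) : Prop :=
  exists x n, dist_is S x (gmul g x) n /\ n <= B.

End Defs.
Arguments non_elementary G : clear implicits.

(* The free subgroup gives exponential growth, so for a suitable scale s the
   ball of radius 3s is much larger than the ball of radius 2s + O(delta).
   Counting then yields three elements h1, h2, h3 of length between 2s and 3s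
   that are not conjugate to short elements (|h h| > |h| + 8 delta) and whose
   geodesics, and those of their inverses, diverge pairwise after distance s.
   Call y aligned with h when the geodesic to y fellow-travels h or h^-1 for
   about |h h| / 2; thin triangles allow y to be aligned with at most one h_i.
   If neither g nor g^-1 is aligned with h and g is long, the path through
   e, g, g h, g h g^-1, [g,h], ... is a broken geodesic with small corners, so
   |[g,h]^m| grows like m (2|g| - 6|h|), which bounds the translation length of
   [g,h] from below. As the gamma_n are distinct, |gamma_n| is unbounded; for
   each n some h_i is aligned with neither gamma_n nor gamma_n^-1, so the
   translation lengths of the [gamma_n, h_i] cannot be bounded for all three i. *)

From Stdlib Require Import List Arith Lia ZArith Classical ClassicalEpsilon.
Import ListNotations.

Local Coercion Z.of_nat : nat >-> Z.

Lemma nat_least (P : nat -> Prop) :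
  (exists n, P n) -> exists n, P n /\ forall m, P m -> n <= m.
Proof.
  intros Hex.
  destruct (Wf_nat.dec_inh_nat_subset_has_unique_least_element P (fun n => classic (P n)) Hex)
    as [n [Hn _]].
  eauto.
Qed.

Lemma nat_ind4 (P : nat -> Prop) :
  P 0 -> P 1 -> P 2 -> P 3 -> (forall k, P k -> P (4 + k)) -> forall k, P k.
Proof.
  intros H0 H1 H2 H3 H4 k.
  induction k as [k IH] using (well_founded_induction lt_wf).
  destruct k as [|[|[|[|k]]]]; auto.
  apply (H4 k), IH. lia.
Qed.

Lemma exists_third n : exists u, n <= 3 * u <= n + 2.
Proof.
  exists ((n + 2) / 3).
  pose proof (Nat.div_mod_eq (n + 2) 3). pose proof (Nat.mod_upper_bound (n + 2) 3). lia.
Qed.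

Lemma exists_half n : exists j, 2 * j <= n <= 2 * j + 1.
Proof.
  exists (n / 2).
  pose proof (Nat.div_mod_eq n 2). pose proof (Nat.mod_upper_bound n 2). lia.
Qed.

Lemma square_le_pow2 k : 4 <= k -> k * k <= 2 ^ k.
Proof.
  induction k as [|k IH]; intros Hk; [lia|].
  destruct (Nat.eq_dec k 3) as [->|Hk3]; [simpl; lia|].
  rewrite Nat.pow_succ_r'. specialize (IH ltac:(lia)). nia.
Qed.

Lemma pow2_beats_linear A B : exists k, A * k + B < 2 ^ k.
Proof.
  exists (A + B + 4). pose proof (square_le_pow2 (A + B + 4) ltac:(lia)). nia.
Qed.

Section RatioGrowth.
Variable f : nat -> nat.
Hypothesis f_mono : forall r r', r <= r' -> f r <= f r'.

(* Two steps of ratio roughly 2/3 bring [2 s] below [s]. *)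
Lemma ratio_bound_doubling Q c :
  (forall s, f (3 * s) <= Q * f (2 * s + c)) ->
  forall s, 15 * c + 20 <= s -> f (2 * s) <= Q * Q * f s.
Proof.
  intros Hratio s Hs.
  destruct (exists_third (2 * s)) as [u Hu].
  destruct (exists_third (2 * u + c)) as [v Hv].
  pose proof (f_mono (2 * s) (3 * u) ltac:(lia)).
  pose proof (f_mono (2 * u + c) (3 * v) ltac:(lia)).
  pose proof (f_mono (2 * v + c) s ltac:(lia)).
  pose proof (Hratio u). pose proof (Hratio v).
  assert (Q * f (2 * u + c) <= Q * (Q * f (2 * v + c))) by (apply Nat.mul_le_mono_l; lia).
  assert (Q * (Q * f (2 * v + c)) <= Q * (Q * f s)) by (do 2 apply Nat.mul_le_mono_l; lia).
  rewrite <- Nat.mul_assoc. lia.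
Qed.

Lemma ratio_bound_iterate Q c s :
  (forall s, f (3 * s) <= Q * f (2 * s + c)) -> 15 * c + 20 <= s ->
  forall k, f (2 ^ k * s) <= (Q * Q) ^ k * f s.
Proof.
  intros Hratio Hs k. induction k as [|k IH]; [rewrite Nat.pow_0_r, !Nat.mul_1_l; lia|].
  rewrite !Nat.pow_succ_r', <- Nat.mul_assoc.
  assert (1 <= 2 ^ k) by (apply Nat.le_succ_l, Nat.neq_0_lt_0, Nat.pow_nonzero; lia).
  pose proof (ratio_bound_doubling Q c Hratio (2 ^ k * s) ltac:(nia)).
  nia.
Qed.

(* Otherwise [f] would grow polynomially. *)
Lemma exp_growth_ratio m Q c :
  (forall k, 2 ^ k <= f (m * k)) -> exists s, Q * f (2 * s + c) < f (3 * s).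
Proof.
  intros Hexp. apply NNPP. intros Hno.
  assert (Hratio : forall s, f (3 * s) <= Q * f (2 * s + c)).
  { intros s. apply Nat.nlt_ge. intros H. apply Hno. eauto. }
  set (s1 := S m * (15 * c + 20)).
  destruct (pow2_beats_linear (Q * Q) (f s1)) as [k Hk].
  assert (Hlow : 2 ^ (2 ^ k) <= f (2 ^ k * s1)).
  { pose proof (Hexp (2 ^ k * (15 * c + 20))).
    assert (2 ^ (2 ^ k) <= 2 ^ (2 ^ k * (15 * c + 20))) by (apply Nat.pow_le_mono_r; nia).
    assert (f (m * (2 ^ k * (15 * c + 20))) <= f (2 ^ k * s1)) by (apply f_mono; unfold s1; nia).
    lia. }
  assert (Hup : (Q * Q) ^ k * f s1 <= 2 ^ (Q * Q * k + f s1)).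
  { rewrite Nat.pow_add_r, Nat.pow_mul_r. apply Nat.mul_le_mono.
    - apply Nat.pow_le_mono_l, Nat.lt_le_incl, Nat.pow_gt_lin_r; lia.
    - apply Nat.lt_le_incl, Nat.pow_gt_lin_r; lia. }
  pose proof (ratio_bound_iterate Q c s1 Hratio ltac:(unfold s1; nia) k).
  assert (2 ^ (2 ^ k) <= 2 ^ (Q * Q * k + f s1)) as Hpow by lia.
  apply Nat.pow_le_mono_r_iff in Hpow; lia.
Qed.
End RatioGrowth.

Section Groups.
Context {G : Group}.
Local Infix "**" := (@gmul G) (at level 40, left associativity).
Local Notation e := (@gone G).
Local Notation inv := (@ginv G).

Lemma mulgA x y z : x ** (y ** z) = x ** y ** z. Proof. apply gmul_assoc. Qed.
Lemma mul1g x : e ** x = x. Proof. apply gmul_1l. Qed.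
Lemma mulVg x : inv x ** x = e. Proof. apply gmul_Vl. Qed.

Lemma mulgV x : x ** inv x = e.
Proof.
  rewrite <- (mul1g (x ** inv x)), <- (mulVg (inv x)) at 1.
  rewrite <- mulgA, (mulgA (inv x) x), mulVg, mul1g. apply mulVg.
Qed.

Lemma mulg1 x : x ** e = x.
Proof. rewrite <- (mulVg x), mulgA, mulgV, mul1g. reflexivity. Qed.

Lemma mulKg x y : inv x ** (x ** y) = y.
Proof. rewrite mulgA, mulVg, mul1g. reflexivity. Qed.

Lemma mulKVg x y : x ** (inv x ** y) = y.
Proof. rewrite mulgA, mulgV, mul1g. reflexivity. Qed.

Lemma mulgK x y : x ** y ** inv y = x.
Proof. rewrite <- mulgA, mulgV, mulg1. reflexivity. Qed.

Lemma mulgI x y z : x ** y = x ** z -> y = z.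
Proof. intros H. rewrite <- (mulKg x y), H, mulKg. reflexivity. Qed.

Lemma invg_unique x y : x ** y = e -> inv x = y.
Proof. intros H. apply (mulgI x). rewrite mulgV. auto. Qed.

Lemma invgK x : inv (inv x) = x.
Proof. apply invg_unique, mulVg. Qed.

Lemma invMg x y : inv (x ** y) = inv y ** inv x.
Proof. apply invg_unique. rewrite mulgA, <- (mulgA x y), mulgV, mulg1, mulgV. reflexivity. Qed.

Lemma invg1 : inv e = e.
Proof. apply invg_unique, mul1g. Qed.

Lemma word_prod_app (u v : list G) : word_prod (u ++ v) = word_prod u ** word_prod v.
Proof.
  induction u as [|x u IH]; simpl; [rewrite mul1g; reflexivity|].
  unfold word_prod in *. simpl. rewrite IH, mulgA. reflexivity.
Qed.

Fixpoint gpow (g : G) (m : nat) : G :=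
  match m with 0 => e | S m => g ** gpow g m end.

Fixpoint comm_letter (a b : G) (k : nat) : G :=
  match k with
  | 0 => a | 1 => b | 2 => inv a | 3 => inv b
  | S (S (S (S k))) => comm_letter a b k
  end.

Fixpoint comm_path (a b : G) (k : nat) : G :=
  match k with 0 => e | S k => comm_path a b k ** comm_letter a b k end.

Lemma comm_path_add4 a b k : comm_path a b (4 + k) = comm a b ** comm_path a b k.
Proof.
  induction k as [|k IH].
  - cbn. unfold comm. rewrite mul1g, mulg1, !mulgA. reflexivity.
  - change (comm_path a b (4 + k) ** comm_letter a b k
            = comm a b ** (comm_path a b k ** comm_letter a b k)).
    rewrite IH, mulgA. reflexivity.
Qed.

Lemma comm_path_4m a b m : comm_path a b (4 * m) = gpow (comm a b) m.
Proof.
  induction m as [|m IH]; [reflexivity|].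
  replace (4 * S m) with (4 + 4 * m) by lia.
  rewrite comm_path_add4, IH. reflexivity.
Qed.

Section WordMetric.
Variable gens : list G.
Hypothesis gens_generate : generates gens.

Lemma word_len_exists g : exists n, word_len_is gens g n.
Proof.
  destruct (nat_least (fun n => exists w, represents gens w g /\ length w = n))
    as [n [[w [Hw Hlen]] Hmin]].
  { destruct (gens_generate g) as [w Hw]. eauto. }
  exists n. split; [eauto|]. intros w' Hw'. apply Hmin. eauto.
Qed.

Definition norm (g : G) : nat :=
  proj1_sig (constructive_indefinite_description _ (word_len_exists g)).

Lemma norm_spec g : word_len_is gens g (norm g).
Proof. unfold norm. destruct constructive_indefinite_description; assumption. Qed.

Lemma word_len_is_unique g n m : word_len_is gens g n -> word_len_is gens g m -> n = m.
Proof.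
  intros [[w1 [H1 L1]] M1] [[w2 [H2 L2]] M2].
  specialize (M1 _ H2). specialize (M2 _ H1). lia.
Qed.

Lemma norm_le_length g w : represents gens w g -> norm g <= length w.
Proof. apply norm_spec. Qed.

Lemma geodesic_word g : exists w, represents gens w g /\ length w = norm g.
Proof. apply norm_spec. Qed.

Lemma represents_app u v x y :
  represents gens u x -> represents gens v y -> represents gens (u ++ v) (x ** y).
Proof.
  intros [Fu <-] [Fv <-]. split; [apply Forall_app; auto | apply word_prod_app].
Qed.

Lemma represents_inv w x : represents gens w x -> represents gens (rev (map inv w)) (inv x).
Proof.
  intros [F <-]. split.
  - apply Forall_rev, Forall_map. eapply Forall_impl; [|exact F].
    intros y [Hy|Hy]; [right; rewrite invgK | left]; assumption.
  - induction w as [|y w IH]; simpl; [symmetry; apply invg1|].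
    inversion F; subst. rewrite word_prod_app, IH by assumption.
    unfold word_prod. simpl. rewrite mulg1, invMg. reflexivity.
Qed.

Lemma norm_mul x y : norm (x ** y) <= norm x + norm y.
Proof.
  destruct (geodesic_word x) as [u [Hu <-]], (geodesic_word y) as [v [Hv <-]].
  rewrite <- length_app. apply norm_le_length, represents_app; assumption.
Qed.

Lemma norm_inv x : norm (inv x) = norm x.
Proof.
  assert (Hle : forall y, norm (inv y) <= norm y).
  { intros y. destruct (geodesic_word y) as [w [Hw <-]].
    rewrite <- (length_map inv w), <- length_rev. apply norm_le_length, represents_inv, Hw. }
  apply Nat.le_antisymm; [apply Hle|]. rewrite <- (invgK x) at 1. apply Hle.
Qed.

Lemma norm1 : norm e = 0.
Proof.
  pose proof (norm_le_length e [] (conj (Forall_nil _) eq_refl)). simpl in *. lia.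
Qed.

Definition dist (x y : G) : nat := norm (inv x ** y).

Lemma dist_isE x y n : dist_is gens x y n <-> n = dist x y.
Proof.
  split.
  - intros H. eapply word_len_is_unique; [exact H | apply norm_spec].
  - intros ->. apply norm_spec.
Qed.

Lemma dist_sym x y : dist x y = dist y x.
Proof. unfold dist. rewrite <- norm_inv, invMg, invgK. reflexivity. Qed.

Lemma dist_triangle x y z : dist x z <= dist x y + dist y z.
Proof.
  unfold dist. replace (inv x ** z) with ((inv x ** y) ** (inv y ** z)); [apply norm_mul|].
  rewrite <- mulgA, mulKVg. reflexivity.
Qed.

Lemma dist_mul2l g x y : dist (g ** x) (g ** y) = dist x y.
Proof. unfold dist. rewrite invMg, <- mulgA, mulKg. reflexivity. Qed.

Lemma distxx x : dist x x = 0.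
Proof. unfold dist. rewrite mulVg. apply norm1. Qed.

Lemma dist1g x : dist e x = norm x.
Proof. unfold dist. rewrite invg1, mul1g. reflexivity. Qed.

Lemma distg1 x : dist x e = norm x.
Proof. rewrite dist_sym. apply dist1g. Qed.

Lemma dist_mulr x y : dist x (x ** y) = norm y.
Proof. unfold dist. rewrite mulKg. reflexivity. Qed.

Lemma prefix_dist_le w i k : Forall (S_letter gens) w -> i <= k ->
  dist (word_prod (firstn i w)) (word_prod (firstn k w)) <= k - i.
Proof.
  intros Hw Hik.
  assert (Hsplit : firstn k w = firstn i w ++ skipn i (firstn k w)).
  { rewrite <- (firstn_skipn i (firstn k w)) at 1. rewrite firstn_firstn, Nat.min_l by lia.
    reflexivity. }
  unfold dist. rewrite Hsplit, word_prod_app, mulKg.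
  eapply Nat.le_trans; [apply norm_le_length; split; [|reflexivity]|].
  - rewrite <- (firstn_skipn k w) in Hw. apply Forall_app in Hw as [Hw _].
    rewrite <- (firstn_skipn i (firstn k w)) in Hw. apply Forall_app in Hw as [_ Hw]. exact Hw.
  - rewrite length_skipn, length_firstn. lia.
Qed.

Lemma geodesic_exists g : exists P : nat -> G, P 0 = e /\ P (norm g) = g /\
  forall i k, i <= k <= norm g -> dist (P i) (P k) = k - i.
Proof.
  destruct (geodesic_word g) as [w [[Hw Hprod] Hlen]].
  exists (fun k => word_prod (firstn k w)). split; [reflexivity|]. split.
  { rewrite <- Hlen, firstn_all. exact Hprod. }
  intros i k Hik. cbv beta. apply Nat.le_antisymm; [apply prefix_dist_le; [exact Hw | lia]|].
  pose proof (prefix_dist_le w 0 i Hw ltac:(lia)) as H0i.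
  pose proof (prefix_dist_le w k (length w) Hw ltac:(lia)) as Hkn.
  rewrite firstn_all, Hprod in Hkn. simpl firstn in H0i.
  pose proof (dist_triangle e (word_prod (firstn i w)) g).
  pose proof (dist_triangle (word_prod (firstn i w)) (word_prod (firstn k w)) g).
  change (word_prod []) with e in H0i. rewrite !dist1g in *. lia.
Qed.

Definition geod (g : G) : nat -> G :=
  proj1_sig (constructive_indefinite_description _ (geodesic_exists g)).

Lemma geod_spec g : geod g 0 = e /\ geod g (norm g) = g /\
  forall i k, i <= k <= norm g -> dist (geod g i) (geod g k) = k - i.
Proof. unfold geod. destruct constructive_indefinite_description; assumption. Qed.

Lemma geod_dist g i k : i <= k <= norm g -> dist (geod g i) (geod g k) = k - i.
Proof. apply geod_spec. Qed.

Lemma geod_norm g i : i <= norm g -> norm (geod g i) = i.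
Proof.
  intros Hi. rewrite <- dist1g. destruct (geod_spec g) as [<- _].
  rewrite geod_dist by lia. lia.
Qed.

Lemma geod_dist_end g i : i <= norm g -> dist (geod g i) g = norm g - i.
Proof.
  intros Hi. destruct (geod_spec g) as [_ [Hend _]].
  rewrite <- Hend at 2. apply geod_dist. lia.
Qed.

Lemma four_point_of_hyperbolic : hyperbolic gens -> exists δ, forall x y z w,
  dist x y + dist z w <= Nat.max (dist x z + dist y w) (dist x w + dist y z) + 2 * δ.
Proof.
  intros [δ Hδ]. exists δ. intros x y z w. apply (Hδ x y z w); apply dist_isE; reflexivity.
Qed.

Definition letters : list G := gens ++ map inv gens.

Lemma S_letter_iff_in_letters x : S_letter gens x <-> In x letters.
Proof.
  unfold letters. rewrite in_app_iff, in_map_iff. split.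
  - intros [H|H]; [left; exact H | right; exists (inv x); rewrite invgK; auto].
  - intros [H|[y [<- H]]]; [left | right; rewrite invgK]; exact H.
Qed.

Fixpoint words (k : nat) : list (list G) :=
  match k with
  | 0 => [[]]
  | S k => flat_map (fun w => map (fun l => l :: w) letters) (words k)
  end.

Lemma in_words_iff k w : In w (words k) <-> length w = k /\ Forall (S_letter gens) w.
Proof.
  revert w. induction k as [|k IH]; intros w; simpl.
  - split; [intros [<-|[]]; auto | intros [Hw _]; destruct w; [auto | discriminate]].
  - rewrite in_flat_map. split.
    + intros [w' [Hw' Hin]]. apply in_map_iff in Hin as [l [<- Hl]].
      apply IH in Hw' as [Hlen HF].
      split; [simpl; auto | constructor; [apply S_letter_iff_in_letters|]; auto].
    + intros [Hlen HF]. destruct w as [|l w]; [discriminate|]. inversion HF; subst.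
      exists w. split; [apply IH; auto|].
      apply in_map_iff. exists l. split; [|apply S_letter_iff_in_letters]; auto.
Qed.

Definition ball (r : nat) : list G :=
  nodup (fun x y => excluded_middle_informative (x = y))
        (map word_prod (flat_map words (seq 0 (S r)))).

Lemma in_ball_iff x r : In x (ball r) <-> norm x <= r.
Proof.
  unfold ball. rewrite nodup_In, in_map_iff. split.
  - intros [w [<- Hw]]. apply in_flat_map in Hw as [k [Hk Hw]].
    apply in_seq in Hk. apply in_words_iff in Hw as [Hlen HF].
    pose proof (norm_le_length (word_prod w) w (conj HF eq_refl)). lia.
  - intros Hx. destruct (geodesic_word x) as [w [[HF Hprod] Hlen]].
    exists w. split; [exact Hprod|]. apply in_flat_map. exists (length w).
    split; [apply in_seq; lia | apply in_words_iff; auto].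
Qed.

Definition ball_size (r : nat) : nat := length (ball r).

Lemma ball_size_mono r r' : r <= r' -> ball_size r <= ball_size r'.
Proof.
  intros Hr. apply NoDup_incl_length; [apply NoDup_nodup|].
  intros x Hx. apply in_ball_iff in Hx. apply in_ball_iff. lia.
Qed.

Lemma ball_not_covered r (M : list G) :
  length M < ball_size r -> exists x, norm x <= r /\ ~ In x M.
Proof.
  intros HM. apply NNPP. intros Hno.
  assert (Hincl : incl (ball r) M).
  { intros x Hx. apply in_ball_iff in Hx. apply NNPP. intros Hx'. apply Hno. eauto. }
  apply NoDup_incl_length in Hincl; [|apply NoDup_nodup]. unfold ball_size in HM. lia.
Qed.

Lemma injective_norm_unbounded (gamma : nat -> G) :
  (forall m n, gamma m = gamma n -> m = n) -> forall R, exists n, R < norm (gamma n).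
Proof.
  intros Hinj R. apply NNPP. intros Hno.
  assert (Hincl : incl (map gamma (seq 0 (S (ball_size R)))) (ball R)).
  { intros x Hx. apply in_map_iff in Hx as [n [<- _]].
    apply in_ball_iff, Nat.nlt_ge. intros Hn. apply Hno. eauto. }
  apply NoDup_incl_length in Hincl.
  - rewrite length_map, length_seq in Hincl. unfold ball_size in Hincl. lia.
  - apply NoDup_map_NoDup_ForallPairs; [intros m n _ _; apply Hinj | apply seq_NoDup].
Qed.

Section FreeGrowth.
Variables a b : G.
Hypothesis ab_free : free_pair a b.

Definition pos_letters (w : list bool) : list (bool * bool) := map (fun c => (c, true)) w.

Definition pos_word (w : list bool) : G := word_prod (map (letter_val a b) (pos_letters w)).

Lemma word_prod_inv_letters w :
  word_prod (map (letter_val a b) (map (fun c => (c, false)) (rev w))) = inv (pos_word w).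
Proof.
  induction w as [|c w IH]; [symmetry; apply invg1|].
  simpl rev. rewrite !map_app, word_prod_app, IH.
  unfold pos_word, word_prod. simpl. rewrite mulg1, invMg. reflexivity.
Qed.

Lemma freely_reduced_pos x w : snd x = true -> freely_reduced (x :: pos_letters w).
Proof.
  revert x. induction w as [|c w IH]; intros x Hx; [exact I|].
  split; [rewrite Hx; simpl; tauto | exact (IH (c, true) eq_refl)].
Qed.

Lemma freely_reduced_neg_app w z l : snd z = false -> freely_reduced (z :: l) ->
  freely_reduced (map (fun c => (c, false)) w ++ z :: l).
Proof.
  intros Hz Hl. induction w as [|c [|c' w] IH]; simpl in *; [exact Hl| |].
  - split; [rewrite Hz; tauto | exact Hl].
  - split; [tauto | exact IH].
Qed.

Lemma pos_word_head_neq w1 w2 : a ** pos_word w1 <> b ** pos_word w2.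
Proof.
  intros Heq.
  apply (ab_free (map (fun c => (c, false)) (rev w2)
                   ++ (false, false) :: (true, true) :: pos_letters w1)).
  - destruct (rev w2); discriminate.
  - apply freely_reduced_neg_app; [reflexivity|].
    split; [simpl; intros [H _]; discriminate | apply freely_reduced_pos; reflexivity].
  - rewrite map_app, word_prod_app, word_prod_inv_letters.
    change (inv (pos_word w2) ** (inv b ** (a ** pos_word w1)) = e).
    rewrite Heq, mulKg, mulVg. reflexivity.
Qed.

Fixpoint pos_words (k : nat) : list G :=
  match k with
  | 0 => [e]
  | S k => map (gmul a) (pos_words k) ++ map (gmul b) (pos_words k)
  end.

Lemma in_pos_words k x : In x (pos_words k) -> exists w, x = pos_word w.
Proof.
  revert x. induction k as [|k IH]; intros x Hx; simpl in Hx.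
  - destruct Hx as [<-|[]]. exists []. reflexivity.
  - apply in_app_or in Hx as [Hx|Hx]; apply in_map_iff in Hx as [y [<- Hy]];
      destruct (IH y Hy) as [w ->]; [exists (true :: w) | exists (false :: w)]; reflexivity.
Qed.

Lemma NoDup_pos_words k : NoDup (pos_words k).
Proof.
  induction k as [|k IH]; simpl; [repeat constructor; auto|].
  apply NoDup_app.
  1, 2: apply NoDup_map_NoDup_ForallPairs; [intros x y _ _; apply mulgI | exact IH].
  intros x Hxa Hxb.
  apply in_map_iff in Hxa as [y [<- Hy]], Hxb as [z [Hz' Hz]].
  destruct (in_pos_words k y Hy) as [w1 ->], (in_pos_words k z Hz) as [w2 ->].
  exact (pos_word_head_neq w1 w2 (eq_sym Hz')).
Qed.

Lemma length_pos_words k : length (pos_words k) = 2 ^ k.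
Proof. induction k; simpl; [reflexivity|]. rewrite length_app, !length_map. lia. Qed.

Lemma norm_pos_words k x : In x (pos_words k) -> norm x <= Nat.max (norm a) (norm b) * k.
Proof.
  revert x. induction k as [|k IH]; intros x Hx; simpl in Hx.
  - destruct Hx as [<-|[]]. rewrite norm1. lia.
  - apply in_app_or in Hx as [Hx|Hx]; apply in_map_iff in Hx as [y [<- Hy]];
      pose proof (IH y Hy); pose proof (norm_mul a y); pose proof (norm_mul b y); nia.
Qed.

Lemma ball_size_exp k : 2 ^ k <= ball_size (Nat.max (norm a) (norm b) * k).
Proof.
  rewrite <- length_pos_words. apply NoDup_incl_length; [apply NoDup_pos_words|].
  intros x Hx. apply in_ball_iff, norm_pos_words, Hx.
Qed.

End FreeGrowth.

Lemma comm_letters_norm a b k :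
  norm (comm_letter a b k) + norm (comm_letter a b (S k)) + norm (comm_letter a b (S (S k)))
  + norm (comm_letter a b (S (S (S k)))) = 2 * norm a + 2 * norm b.
Proof.
  revert k. apply nat_ind4; [..|intros k IH; exact IH]; cbn; rewrite ?norm_inv; lia.
Qed.

Lemma displacement_ge_of_power_growth (c : G) (L : Z) :
  (forall m : nat, (m * L <= norm (gpow c m))%Z) -> forall y, (L <= dist y (c ** y))%Z.
Proof.
  intros Hgrowth y.
  assert (Hpow : forall m, dist y (gpow c m ** y) <= m * dist y (c ** y)).
  { induction m as [|m IH]; cbn [gpow]; [rewrite mul1g, distxx; lia|].
    rewrite <- mulgA. pose proof (dist_triangle y (c ** y) (c ** (gpow c m ** y))).
    rewrite dist_mul2l in *. lia. }
  (* Displacing [y] by [c^m] costs at most [m] times the displacement of [c],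
     while [|c^m| >= m L]; take [m] larger than [2 |y|]. *)
  set (m := 2 * norm y + 1).
  pose proof (Hpow m). pose proof (Hgrowth m).
  pose proof (dist_triangle e y (gpow c m)).
  pose proof (dist_triangle y (gpow c m ** y) (gpow c m)).
  assert (dist (gpow c m ** y) (gpow c m) = norm y).
  { rewrite <- (mulg1 (gpow c m)) at 2. rewrite dist_mul2l. apply distg1. }
  rewrite !dist1g in *.
  assert (Hm : m = 2 * norm y + 1) by reflexivity. clearbody m.
  nia.
Qed.

Section Hyperbolic.
Variable δ : nat.
Hypothesis four_point : forall x y z w,
  dist x y + dist z w <= Nat.max (dist x z + dist y w) (dist x w + dist y z) + 2 * δ.

(* Twice the Gromov product [(x|y)_w], which keeps it integral. *)
Definition gp (w x y : G) : Z := (dist w x + dist w y - dist x y)%Z.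

Lemma gp_sym w x y : gp w x y = gp w y x.
Proof. unfold gp. rewrite (dist_sym x y). lia. Qed.

Lemma gp_four_point w x y z : (Z.min (gp w x z) (gp w z y) - 2 * δ <= gp w x y)%Z.
Proof.
  unfold gp. pose proof (four_point x y z w) as H.
  rewrite (dist_sym z w), (dist_sym y w), (dist_sym x w), (dist_sym y z) in H. lia.
Qed.

Lemma gp_mul2l g w x y : gp (g ** w) (g ** x) (g ** y) = gp w x y.
Proof. unfold gp. rewrite !dist_mul2l. reflexivity. Qed.

Lemma gp_le_dist w x y : (gp w x y <= 2 * dist w y)%Z.
Proof. unfold gp. pose proof (dist_triangle w y x). rewrite (dist_sym y x) in *. lia. Qed.

Lemma gp1_le x y : (gp e x y <= 2 * norm x)%Z /\ (gp e x y <= 2 * norm y)%Z.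
Proof.
  rewrite <- !dist1g, gp_sym at 1. split; apply gp_le_dist.
Qed.

Lemma gp1_inv h : gp e h (inv h) = (2 * norm h - norm (h ** h))%Z.
Proof.
  unfold gp. rewrite !dist1g, norm_inv. unfold dist. rewrite <- invMg, norm_inv. lia.
Qed.

Lemma geodesics_fellow_travel w x y u v s :
  dist w u = s -> dist w u + dist u x = dist w x ->
  dist w v = s -> dist w v + dist v y = dist w y ->
  (2 * s <= gp w x y)%Z -> dist u v <= 4 * δ.
Proof.
  intros. pose proof (gp_four_point w u v x). pose proof (gp_four_point w x v y).
  unfold gp in *. rewrite (dist_sym u x), (dist_sym v y) in *. lia.
Qed.

Lemma geod_shortcut x y r : r <= norm x -> r <= norm y -> (2 * r <= gp e x y)%Z ->
  dist (geod y r) x <= norm x - r + 4 * δ.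
Proof.
  intros Hx Hy Hgp.
  assert (Hclose : dist (geod x r) (geod y r) <= 4 * δ).
  { apply (geodesics_fellow_travel e x y _ _ r); rewrite ?dist1g, ?geod_norm, ?geod_dist_end by lia;
      lia. }
  pose proof (dist_triangle (geod y r) (geod x r) x).
  rewrite (dist_sym _ (geod x r)), geod_dist_end in * by lia. lia.
Qed.

(* If [x x] is not much longer than [x], a geodesic from [e] to [x] and its
   translate from [x] to [x x] fellow-travel near [x], so [x] is conjugate to a
   short element. *)
Lemma short_square_conj x K : norm (x ** x) <= norm x + K ->
  exists p t, x = p ** t ** inv p /\ 2 * norm p <= norm x /\ norm t <= K + 1 + 4 * δ.
Proof.
  intros Hxx. destruct (exists_half (norm x - K)) as [j Hj].
  set (p := geod x j). set (q := geod x (norm x - j)).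
  assert (Hclose : dist q (x ** p) <= 4 * δ).
  { apply (geodesics_fellow_travel x e (x ** x) _ _ j).
    - unfold q. rewrite dist_sym, geod_dist_end; lia.
    - unfold q. rewrite (dist_sym x), geod_dist_end, dist_sym, dist1g, geod_norm, distg1; lia.
    - unfold p. rewrite dist_mulr, geod_norm; lia.
    - unfold p. rewrite !dist_mulr, dist_mul2l, geod_norm, geod_dist_end; lia.
    - unfold gp. rewrite distg1, !dist_mulr, dist1g. pose proof (norm_mul x x). lia. }
  exists p, (inv p ** x ** p). split; [|split].
  - rewrite (mulgA p), mulgK, mulKVg. reflexivity.
  - unfold p. rewrite geod_norm; lia.
  - rewrite <- mulgA. change (dist p (x ** p) <= K + 1 + 4 * δ).
    pose proof (dist_triangle p q (x ** p)).
    unfold p, q in *. rewrite geod_dist in * by lia. lia.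
Qed.

(* Local-to-global for broken geodesics: when every segment is long compared
   with the Gromov products at its two corners, the path keeps moving away
   from its starting point. *)
Lemma broken_geodesic_gp (x : nat -> G) (A : nat -> Z) :
  (forall k, (gp (x (S k)) (x k) (x (S (S k))) <= A (S k))%Z) ->
  (forall k, 1 <= k -> (A k + A (S k) + 4 * δ < 2 * dist (x k) (x (S k)))%Z) ->
  forall k, 1 <= k -> (gp (x k) (x 0%nat) (x (S k)) <= A k + 2 * δ)%Z.
Proof.
  intros Hcorner Hlong k Hk. induction k as [|k IH]; [lia|].
  destruct k as [|k]; [specialize (Hcorner 0); lia|].
  specialize (IH ltac:(lia)). specialize (Hlong (S k) ltac:(lia)). specialize (Hcorner (S k)).
  set (o := x 0%nat) in *.
  pose proof (gp_four_point (x (S (S k))) (x (S k)) (x (S (S (S k)))) o).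
  assert (gp (x (S (S k))) (x (S k)) o + gp (x (S k)) o (x (S (S k)))
          = 2 * dist (x (S k)) (x (S (S k))))%Z.
  { unfold gp. rewrite (dist_sym (x (S (S k))) (x (S k))), (dist_sym (x (S (S k))) o). lia. }
  lia.
Qed.

(* [k + 3] stands for the previous index [k - 1] modulo 4. *)
Definition comm_corner (a b : G) (k : nat) : Z :=
  gp e (inv (comm_letter a b (k + 3))) (comm_letter a b k).

Lemma gp_comm_path a b k :
  gp (comm_path a b (S k)) (comm_path a b k) (comm_path a b (S (S k))) = comm_corner a b (S k).
Proof.
  unfold comm_corner. replace (S k + 3) with (4 + k) by lia.
  change (comm_letter a b (4 + k)) with (comm_letter a b k). cbn [comm_path].
  rewrite <- (gp_mul2l (comm_path a b k ** comm_letter a b k) e), mulg1, mulgK. reflexivity.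
Qed.

Lemma comm_corner_le a b k : (comm_corner a b k <= 2 * norm b)%Z.
Proof.
  revert k. apply nat_ind4; [..|intros k IH; exact IH];
    unfold comm_corner; cbn [comm_letter Nat.add]; rewrite ?invgK;
    match goal with |- (gp e ?u ?v <= _)%Z => pose proof (gp1_le u v) end;
    rewrite ?norm_inv in *; lia.
Qed.

Section CommutatorPath.
Variables a b : G.
Hypothesis corner_b : (gp e (inv a) b + gp e (inv b) (inv a) + 4 * δ < 2 * norm b)%Z.
Hypothesis corner_inv_b : (gp e a (inv b) + gp e b a + 4 * δ < 2 * norm b)%Z.
Hypothesis a_long : 2 * norm b + 2 * δ < norm a.

Lemma comm_corner_small k :
  (comm_corner a b k + comm_corner a b (S k) + 4 * δ < 2 * norm (comm_letter a b k))%Z.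
Proof.
  revert k. apply nat_ind4; [..|intros k IH; exact IH];
    pose proof (comm_corner_le a b 0); pose proof (comm_corner_le a b 1);
    pose proof (comm_corner_le a b 2); pose proof (comm_corner_le a b 3);
    unfold comm_corner in *; cbn [comm_letter Nat.add] in *; rewrite ?invgK, ?norm_inv in *; lia.
Qed.

Lemma comm_path_step k :
  dist e (comm_path a b k) + norm (comm_letter a b k)
  <= dist e (comm_path a b (S k)) + 2 * norm b + 2 * δ.
Proof.
  destruct k as [|k].
  - cbn [comm_path comm_letter]. rewrite distxx, mul1g, dist1g. lia.
  - assert (Hstep : forall j,
               dist (comm_path a b j) (comm_path a b (S j)) = norm (comm_letter a b j)).
    { intros j. apply dist_mulr. }
    pose proof (broken_geodesic_gp (comm_path a b) (comm_corner a b)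
                  (fun j => Z.eq_le_incl _ _ (gp_comm_path a b j))) as Hgp.
    specialize (Hgp ltac:(intros j _; rewrite Hstep; apply comm_corner_small) (S k) ltac:(lia)).
    pose proof (comm_corner_le a b (S k)).
    unfold gp in Hgp. rewrite Hstep, dist_sym in Hgp. cbn [comm_path] in *. lia.
Qed.

Lemma comm_power_growth (m : nat) :
  (m * (2 * norm a - 6 * norm b - 8 * δ) <= norm (gpow (comm a b) m))%Z.
Proof.
  rewrite <- comm_path_4m, <- (dist1g (comm_path a b (4 * m))).
  induction m as [|m IH]; [lia|].
  replace (4 * S m) with (S (S (S (S (4 * m))))) by lia.
  pose proof (comm_letters_norm a b (4 * m)).
  pose proof (comm_path_step (4 * m)). pose proof (comm_path_step (S (4 * m))).
  pose proof (comm_path_step (S (S (4 * m)))). pose proof (comm_path_step (S (S (S (4 * m))))).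
  rewrite Nat2Z.inj_succ, Z.mul_succ_l. lia.
Qed.

Lemma comm_displacement y : (2 * norm a - 6 * norm b - 8 * δ <= dist y (comm a b ** y))%Z.
Proof. apply displacement_ge_of_power_growth, comm_power_growth. Qed.

End CommutatorPath.

Definition aligned (y h : G) : Prop :=
  exists u, In u [h; inv h] /\ (norm (h ** h) - 6 * δ <= gp e y u)%Z.

Lemma not_aligned y h : ~ aligned y h ->
  (gp e y h < norm (h ** h) - 6 * δ)%Z /\ (gp e y (inv h) < norm (h ** h) - 6 * δ)%Z.
Proof.
  intros Hy.
  split; apply Z.nle_gt; intros Hle; apply Hy; eexists; (split; [|exact Hle]); simpl; auto.
Qed.

Lemma comm_displacement_of_unaligned g h : ~ aligned g h -> ~ aligned (inv g) h ->
  2 * norm h + 2 * δ < norm g ->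
  forall y, (2 * norm g - 6 * norm h - 8 * δ <= dist y (comm g h ** y))%Z.
Proof.
  intros Hg Hginv Hlong. apply comm_displacement; [| |exact Hlong].
  - apply not_aligned in Hginv as [H1 H2].
    pose proof (gp_four_point e h (inv h) (inv g)). rewrite gp1_inv in *.
    rewrite (gp_sym e h (inv g)), (gp_sym e (inv h) (inv g)) in *. lia.
  - apply not_aligned in Hg as [H1 H2].
    pose proof (gp_four_point e h (inv h) g). rewrite gp1_inv in *.
    rewrite (gp_sym e h g) in *. lia.
Qed.

Lemma transl_len_comm_gt g h K : ~ aligned g h -> ~ aligned (inv g) h ->
  K + 3 * norm h + 4 * δ < norm g -> ~ transl_len_le gens (comm g h) K.
Proof.
  intros Hg Hginv Hlong [y [k [Hk Hle]]]. apply dist_isE in Hk as ->.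
  pose proof (comm_displacement_of_unaligned g h Hg Hginv ltac:(lia) y). lia.
Qed.

Definition separated (h1 h2 : G) : Prop :=
  forall u v, In u [h1; inv h1] -> In v [h2; inv h2] ->
    (gp e u v + 8 * δ < Z.min (norm (h1 ** h1)) (norm (h2 ** h2)))%Z.

Lemma aligned_exclusive y h1 h2 : separated h1 h2 -> aligned y h1 -> aligned y h2 -> False.
Proof.
  intros Hsep [u [Hu Hyu]] [v [Hv Hyv]].
  pose proof (Hsep u v Hu Hv). pose proof (gp_four_point e u v y).
  rewrite (gp_sym e u y) in *. lia.
Qed.

Lemma exists_unaligned y z h1 h2 h3 :
  separated h1 h2 -> separated h1 h3 -> separated h2 h3 ->
  exists h, In h [h1; h2; h3] /\ ~ aligned y h /\ ~ aligned z h.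
Proof.
  intros S12 S13 S23.
  pose proof (aligned_exclusive y h1 h2 S12). pose proof (aligned_exclusive z h1 h2 S12).
  pose proof (aligned_exclusive y h1 h3 S13). pose proof (aligned_exclusive z h1 h3 S13).
  pose proof (aligned_exclusive y h2 h3 S23). pose proof (aligned_exclusive z h2 h3 S23).
  destruct (classic (aligned y h1 \/ aligned z h1)); [|exists h1; simpl; tauto].
  destruct (classic (aligned y h2 \/ aligned z h2)); [|exists h2; simpl; tauto].
  exists h3. simpl. tauto.
Qed.

Definition conjugates (r K : nat) : list G :=
  map (fun pt => fst pt ** snd pt ** inv (fst pt)) (list_prod (ball r) (ball K)).

Definition shadow (y : G) (s : nat) : list G :=
  map (fun z => geod y s ** z) (ball (2 * s + 4 * δ)).

Lemma in_conjugates x s : norm x <= 3 * s -> norm (x ** x) <= norm x + 8 * δ ->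
  In x (conjugates (2 * s) (12 * δ + 1)).
Proof.
  intros Hx Hxx. destruct (short_square_conj x (8 * δ) Hxx) as [p [t [Hpt [Hp Ht]]]].
  apply in_map_iff. exists (p, t). split; [symmetry; exact Hpt|].
  apply in_prod; apply in_ball_iff; lia.
Qed.

Lemma in_shadow x y s : s <= norm y -> norm x <= 3 * s -> (2 * s < gp e x y)%Z ->
  In x (shadow y s).
Proof.
  intros Hy Hx Hgp. pose proof (gp1_le x y) as [Hgx _].
  pose proof (geod_shortcut x y s ltac:(lia) Hy ltac:(lia)).
  apply in_map_iff. exists (inv (geod y s) ** x). split; [apply mulKVg|].
  apply in_ball_iff. change (dist (geod y s) x <= 2 * s + 4 * δ). lia.
Qed.

Definition generic (s : nat) (x : G) : Prop :=
  2 * s + 4 * δ < norm x /\ norm x + 8 * δ < norm (x ** x).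

(* The non-generic elements of the ball of radius [3 s], and those that, or
   whose inverses, fellow-travel some [y] beyond distance [s], all lie in a
   list that is too short to cover that ball. *)
Lemma exists_generic s (ys : list G) :
  (forall y, In y ys -> s <= norm y) ->
  (1 + ball_size (12 * δ + 1) + 2 * length ys) * ball_size (2 * s + 4 * δ) < ball_size (3 * s) ->
  exists x, generic s x /\ forall y u, In y ys -> In u [x; inv x] -> (gp e u y <= 2 * s)%Z.
Proof.
  intros Hys Hcount.
  destruct (ball_not_covered (3 * s) (ball (2 * s + 4 * δ) ++ conjugates (2 * s) (12 * δ + 1)
      ++ flat_map (fun y => shadow y s ++ map inv (shadow y s)) ys)) as [x [Hx Hout]].
  { unfold conjugates, shadow.
    rewrite !length_app, length_map, length_prod,
      (flat_map_constant_length (c := 2 * ball_size (2 * s + 4 * δ)))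
      by (intros y _; rewrite length_app, !length_map; unfold ball_size; lia).
    pose proof (ball_size_mono (2 * s) (2 * s + 4 * δ) ltac:(lia)).
    assert (ball_size (2 * s) * ball_size (12 * δ + 1)
            <= ball_size (2 * s + 4 * δ) * ball_size (12 * δ + 1))
      by (apply Nat.mul_le_mono_r; lia).
    unfold ball_size in *. nia. }
  rewrite !in_app_iff, in_flat_map in Hout.
  exists x. split; [split|].
  - apply Nat.nle_gt. intros H. apply Hout. left. apply in_ball_iff, H.
  - apply Nat.nle_gt. intros H. apply Hout. right; left. apply in_conjugates; assumption.
  - intros y u Hy Hu. apply Z.nlt_ge. intros Hgp. apply Hout. right; right.
    exists y. split; [exact Hy|]. apply in_app_iff.
    destruct Hu as [<-|[<-|[]]]; [left; apply in_shadow; auto|right].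
    apply in_map_iff. exists (inv x). split; [apply invgK|].
    apply in_shadow; [auto | rewrite norm_inv; lia | exact Hgp].
Qed.

Lemma separated_of_generic s h1 h2 : generic s h1 -> generic s h2 ->
  (forall u v, In u [h1; inv h1] -> In v [h2; inv h2] -> (gp e u v <= 2 * s)%Z) ->
  separated h1 h2.
Proof. intros [? ?] [? ?] Hgp u v Hu Hv. specialize (Hgp u v Hu Hv). lia. Qed.

Lemma exists_separated_triple (a b : G) : free_pair a b ->
  exists h1 h2 h3, separated h1 h2 /\ separated h1 h3 /\ separated h2 h3.
Proof.
  intros Hab.
  destruct (exp_growth_ratio ball_size ball_size_mono (Nat.max (norm a) (norm b))
              (9 + ball_size (12 * δ + 1)) (4 * δ) (ball_size_exp a b Hab)) as [s Hs].
  assert (Hcount : forall ys : list G, length ys <= 4 ->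
    (1 + ball_size (12 * δ + 1) + 2 * length ys) * ball_size (2 * s + 4 * δ) < ball_size (3 * s)).
  { intros ys Hys. eapply Nat.le_lt_trans; [|exact Hs]. apply Nat.mul_le_mono_r. lia. }
  assert (Hlong : forall x, generic s x -> forall y, In y [x; inv x] -> s <= norm y).
  { intros x [Hx _] y [<-|[<-|[]]]; rewrite ?norm_inv; lia. }
  destruct (exists_generic s [] ltac:(simpl; tauto) (Hcount [] ltac:(simpl; lia)))
    as [h1 [G1 _]].
  destruct (exists_generic s [h1; inv h1] (Hlong h1 G1) (Hcount [h1; inv h1] ltac:(simpl; lia)))
    as [h2 [G2 F2]].
  destruct (exists_generic s ([h1; inv h1] ++ [h2; inv h2])) as [h3 [G3 F3]].
  { intros y Hy.
    apply in_app_or in Hy as [Hy|Hy]; [apply (Hlong h1) | apply (Hlong h2)]; assumption. }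
  { apply Hcount. simpl. lia. }
  exists h1, h2, h3.
  split; [|split]; apply (separated_of_generic s); try assumption;
    intros u v Hu Hv; rewrite gp_sym.
  - apply F2; assumption.
  - apply F3; [apply in_or_app; left|]; assumption.
  - apply F3; [apply in_or_app; right|]; assumption.
Qed.

Lemma commutator_translation_unbounded (gamma : nat -> G) h1 h2 h3 :
  (forall m n, gamma m = gamma n -> m = n) ->
  separated h1 h2 -> separated h1 h3 -> separated h2 h3 ->
  exists h, forall B, exists n, ~ transl_len_le gens (comm (gamma n) h) B.
Proof.
  intros Hinj S12 S13 S23. apply NNPP. intros Hno.
  assert (Hbound : forall h, exists K, forall n, transl_len_le gens (comm (gamma n) h) K).
  { intros h. destruct (not_all_ex_not _ _ (not_ex_all_not _ _ Hno h)) as [K HK].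
    exists K. apply not_ex_not_all, HK. }
  destruct (Hbound h1) as [K1 HK1], (Hbound h2) as [K2 HK2], (Hbound h3) as [K3 HK3].
  destruct (injective_norm_unbounded gamma Hinj
              (K1 + K2 + K3 + 3 * (norm h1 + norm h2 + norm h3) + 4 * δ)) as [n Hn].
  destruct (exists_unaligned (gamma n) (inv (gamma n)) h1 h2 h3 S12 S13 S23)
    as [h [Hh [Hg Hginv]]].
  destruct Hh as [<-|[<-|[<-|[]]]];
    [apply (transl_len_comm_gt (gamma n) h1 K1) | apply (transl_len_comm_gt (gamma n) h2 K2)
    | apply (transl_len_comm_gt (gamma n) h3 K3)]; auto; lia.
Qed.

End Hyperbolic.

End WordMetric.
End Groups.

Theorem mainTheorem17 (G : Group) (S : list G) (gamma : nat -> G) :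
  generates S -> hyperbolic S -> non_elementary G ->
  (forall m n, gamma m = gamma n -> m = n) ->
  exists h : G, forall B : nat, exists n : nat,
    ~ transl_len_le S (comm (gamma n) h) B.
Proof.
  intros Hgen Hhyp [a [b Hab]] Hinj.
  destruct (four_point_of_hyperbolic S Hgen Hhyp) as [δ Hδ].
  destruct (exists_separated_triple S Hgen δ Hδ a b Hab) as [h1 [h2 [h3 [S12 [S13 S23]]]]].
  exact (commutator_translation_unbounded S Hgen δ Hδ gamma h1 h2 h3 Hinj S12 S13 S23).
Qed.
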